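(* Let $N$ be an odd prime and let $D$ be a square-free integer such that the Legendre symbol satisfies $\left(\frac{D}{N}\right) = -1$. Write $N + 1 = 2^s u$, where $u$ is an odd integer and $s \ge 1$. For any $w \in \mathcal{G}_N(D) \setminus \{1, -1\}$, one of the following conditions must hold: (a) $w^u \equiv 1 \pmod N$; (b) $w^{2^r u} \equiv -1 \pmod N$ for some integer $0 \le r < s$.
   Context: For an integer $n \ge 2$ and a square-free integer $D$: if $D \equiv 2,3 \pmod 4$, let $\mathcal{I}_n(D) = \{a + b\sqrt{D} : a,b \in \mathbb{Z}/n\mathbb{Z}\}$ (the ring $\mathbb{Z}[\sqrt D]/n\mathbb{Z}[\sqrt D]$) and $\mathcal{G}_n(D) = \{a + b\sqrt{D} \in \mathcal{I}_n(D) : a^2 - Db^2 \equiv 1 \pmod n\}$; if $D \equiv 1 \pmod 4$, let $\omega = \frac{1+\sqrt D}{2}$, $\mathcal{I}_n(D) = \{a + b\omega : a,b \in \mathbb{Z}/n\mathbb{Z}\}$ (the ring $\mathbb{Z}[\omega]/n\mathbb{Z}[\omega]$) and $\mathcal{G}_n(D) = \{a + b\omega \in \mathcal{I}_n(D) : a^2 + ab + \frac{1-D}{4} b^2 \equiv 1 \pmod n\}$. Powers are computed in $\mathcal{I}_n(D)$ and a congruence $x \equiv y \pmod n$ for $x,y \in \mathcal{I}_n(D)$ means equality in $\mathcal{I}_n(D)$. *)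

From mathcomp Require Import all_boot all_order all_algebra.
Set Implicit Arguments. Unset Strict Implicit. Unset Printing Implicit Defensive.
Import Order.TTheory GRing.Theory Num.Theory.
Local Open Scope ring_scope.

(* Square-free integer: no square of a prime divides it (so 0 is not square-free). *)
Definition squarefree (D : int) : Prop :=
  forall p : nat, prime p -> ~ (((p ^ 2)%N %| `|D|%N)%N).

Definition legendre (D : int) (p : nat) : int :=
  if (p%:Z %| D)%Z then 0
  else if [exists x : 'I_p, (p%:Z %| (x%:Z ^+ 2 - D))%Z] then 1 else -1.

(* Elements of I_n(D): pairs (a,b) in Z/nZ, standing for a + b*sqrt(D) when
   D = 2,3 mod 4, and for a + b*omega, omega = (1+sqrt D)/2, when D = 1 mod 4. *)
Definition elt (n : nat) := ('Z_n * 'Z_n)%type.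

Definition D_is_1mod4 (D : int) : bool := ((D %% 4)%Z == 1).

(* Multiplication in I_n(D). For D = 1 mod 4, omega^2 = omega + (D-1)/4. *)
Definition emul (n : nat) (D : int) (x y : elt n) : elt n :=
  let: (a, b) := x in let: (c, d) := y in
  if D_is_1mod4 D then
    (a * c + b * d * ((D - 1) %/ 4)%Z%:~R, a * d + b * c + b * d)
  else
    (a * c + D%:~R * b * d, a * d + b * c).

Definition eone (n : nat) : elt n := (1, 0).
Definition emone (n : nat) : elt n := (-1, 0).

Definition epow (n : nat) (D : int) (x : elt n) (k : nat) : elt n :=
  iter k (emul D x) (eone n).

Definition enorm (n : nat) (D : int) (x : elt n) : 'Z_n :=
  let: (a, b) := x in
  if D_is_1mod4 D then a ^+ 2 + a * b + ((1 - D) %/ 4)%Z%:~R * b ^+ 2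
  else a ^+ 2 - D%:~R * b ^+ 2.

Definition inG (n : nat) (D : int) (x : elt n) : Prop := enorm D x = 1.

From HB Require Import structures.
From mathcomp Require Import all_boot all_algebra all_field.
From mathcomp Require Import ring.
Import GRing.Theory.
Local Open Scope ring_scope.
Set Implicit Arguments. Unset Strict Implicit. Unset Printing Implicit Defensive.

(* Let t be a root of the minimal polynomial X^2 - tr X + nm of omega in an
   algebraic closure K of F_N. As D is not a square mod N, t is not in F_N, so
   the Frobenius map sends t to the other root tr - t, and a + b omega |-> a + b t
   is an injective multiplicative map from I_N(D) to K sending the norm of w to
   its image raised to N + 1. Thus every w in G_N(D) becomes a root of unity of
   order dividing 2^s u in the field K, where the only square roots of 1 are 1
   and -1; halving the exponent s times gives the alternative. *)

Lemma pcharf_gt1 (R : nzRingType) (p : nat) : p \in [pchar R] -> (1 < p)%N.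
Proof. by move/pcharf_prime/prime_gt1. Qed.

Section ZpEmbedding.
Variables (N : nat) (K : nzRingType).
Hypothesis charK : N \in [pchar K].

(* Keyed on the characteristic proof, like [pFrobenius_aut], so that it carries
   a canonical ring morphism structure. *)
Definition Zp_embed of N \in [pchar K] := fun x : 'Z_N => (val x)%:R : K.

Let N_gt1 : (1 < N)%N := pcharf_gt1 charK.

Lemma Zp_embed_nat n : Zp_embed charK n%:R = n%:R.
Proof. by rewrite /Zp_embed Zp_nat /= Zp_cast // (GRing.natr_mod_pchar charK). Qed.

Lemma Zp_embed_is_nmod_morphism : nmod_morphism (Zp_embed charK).
Proof.
split; first exact: (Zp_embed_nat 0).
by move=> x y; rewrite -(natr_Zp x) -(natr_Zp y) -natrD !Zp_embed_nat natrD.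
Qed.

Lemma Zp_embed_is_monoid_morphism : monoid_morphism (Zp_embed charK).
Proof.
split; first exact: (Zp_embed_nat 1).
by move=> x y; rewrite -(natr_Zp x) -(natr_Zp y) -natrM !Zp_embed_nat natrM.
Qed.

HB.instance Definition _ :=
  GRing.isNmodMorphism.Build 'Z_N K (Zp_embed charK) Zp_embed_is_nmod_morphism.
HB.instance Definition _ :=
  GRing.isMonoidMorphism.Build 'Z_N K (Zp_embed charK) Zp_embed_is_monoid_morphism.

Lemma Zp_embed_inj : injective (Zp_embed charK).
Proof.
move=> x y /eqP; rewrite -subr_eq0 -rmorphB /Zp_embed -(dvdn_pcharf charK).
have lt_xy_N : (val (x - y)%R < N)%N :=
  leq_trans (ltn_ord _) (eq_leq (Zp_cast N_gt1)).
rewrite /dvdn modn_small // => /eqP xy0.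
by apply/eqP; rewrite -subr_eq0; apply/eqP/val_inj.
Qed.

Lemma Zp_embed_frobenius x : Zp_embed charK x ^+ N = Zp_embed charK x.
Proof. by rewrite -(pFrobenius_autE charK) pFrobenius_aut_nat. Qed.

End ZpEmbedding.

Section PrimeSubfield.
Variables (N : nat) (K : fieldType).
Hypothesis charK : N \in [pchar K].

Let N_gt1 : (1 < N)%N := pcharf_gt1 charK.

Lemma frobenius_fixed_Zp_embed (x : K) :
  x ^+ N = x -> exists y : 'Z_N, x = Zp_embed charK y.
Proof.
move=> x_fixed; case: (boolP [exists y : 'Z_N, x == Zp_embed charK y]).
  by case/existsP=> y /eqP; exists y.
move/existsPn=> not_image; exfalso.
pose P : {poly K} := 'X^N - 'X.
have size_P : size P = N.+1.
  by rewrite /P size_addl ?size_polyXn // size_opp size_polyX ltnS.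
have root_P z : z ^+ N = z -> root P z by rewrite /root /P !hornerE => ->; rewrite subrr.
have all_roots : all (root P) [seq Zp_embed charK y | y <- enum 'Z_N].
  by apply/allP => _ /mapP [y _ ->]; apply/root_P/(Zp_embed_frobenius charK).
have x_new : x \notin [seq Zp_embed charK y | y <- enum 'Z_N].
  by apply/mapP => -[y _ /eqP]; rewrite (negbTE (not_image y)).
have card_ZN : #|'Z_N| = N by rewrite card_ord Zp_cast.
have := @max_poly_roots K P (x :: map (Zp_embed charK) (enum 'Z_N)).
rewrite -size_poly_eq0 size_P /= size_map -cardE card_ZN ltnn.
rewrite root_P // all_roots x_new.
rewrite map_inj_uniq ?enum_uniq; last exact: Zp_embed_inj.
by move/(_ isT isT isT).
Qed.

Lemma sqr_neq_nonresidue (D : int) (x : K) :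
  legendre D N = -1 -> x ^+ N = x -> x ^+ 2 != D%:~R.
Proof.
move=> nonres /frobenius_fixed_Zp_embed [y ->]; apply/eqP => sqr_yD.
have lt_yN : (val y < N)%N := leq_trans (ltn_ord _) (eq_leq (Zp_cast N_gt1)).
move: nonres; rewrite /legendre; case: ifP => // _.
case: ifP => // /negbT/negP no_sqrt _; apply/no_sqrt/existsP; exists (Ordinal lt_yN).
by rewrite (dvdz_pcharf charK) rmorphB rmorphXn /= -sqr_yD subrr.
Qed.

End PrimeSubfield.

(* omega^2 = omega_trace D * omega - omega_norm D, where omega = sqrt D when
   D is not 1 mod 4. *)
Definition omega_trace (D : int) : int := if D_is_1mod4 D then 1 else 0.
Definition omega_norm (D : int) : int :=
  if D_is_1mod4 D then ((1 - D) %/ 4)%Z else - D.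

Lemma omega_norm_1mod4 (D : int) : D_is_1mod4 D -> omega_norm D * 4 = 1 - D.
Proof.
move=> D1; rewrite /omega_norm D1.
have -> : 1 - D = - (D %/ 4)%Z * 4 by rewrite {1}(divz_eq D 4) (eqP D1); ring.
by rewrite mulzK.
Qed.

Lemma emulE (n : nat) (D : int) (a b c d : 'Z_n) :
  emul D (a, b) (c, d) =
  (a * c - (omega_norm D)%:~R * b * d, a * d + b * c + (omega_trace D)%:~R * b * d).
Proof.
rewrite /emul /omega_trace; case: ifP => D1.
  have -> : ((D - 1) %/ 4)%Z = - omega_norm D.
    by rewrite -opprB -omega_norm_1mod4 // -mulNr mulzK.
  by congr pair; ring.
by rewrite /omega_norm D1; congr pair; ring.
Qed.

Lemma enormE (n : nat) (D : int) (a b : 'Z_n) :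
  enorm D (a, b) = a ^+ 2 + (omega_trace D)%:~R * a * b + (omega_norm D)%:~R * b ^+ 2.
Proof.
rewrite /enorm /omega_trace /omega_norm; case: ifP => _; ring.
Qed.

Section OmegaRoot.
Variables (N : nat) (K : fieldType).
Hypothesis charK : N \in [pchar K].
Variables (D : int) (t : K).
Hypothesis nonres : legendre D N = -1.
Local Notation emb := (Zp_embed charK).
Local Notation tr := ((omega_trace D)%:~R : K).
Local Notation nm := ((omega_norm D)%:~R : K).
Hypothesis omega_eq : t ^+ 2 = tr * t - nm.

Lemma omega_not_frobenius_fixed : t ^+ N != t.
Proof.
apply/negP => /eqP t_fixed.
pose r := if D_is_1mod4 D then 2 * t - 1 else t.
have r_fixed : r ^+ N = r.
  rewrite /r -(pFrobenius_autE charK); case: ifP => _;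
    by rewrite ?(rmorphB, rmorphM, rmorph1, rmorph_nat) /= pFrobenius_autE t_fixed.
have sqr_r : r ^+ 2 = D%:~R.
  rewrite /r; case: ifP => D1; last first.
    by rewrite omega_eq /omega_trace /omega_norm D1; ring.
  have D_nm : D = 1 - omega_norm D * 4 by rewrite omega_norm_1mod4 // subKr.
  have -> : (2 * t - 1) ^+ 2 = 4 * t ^+ 2 - 4 * t + 1 by ring.
  by rewrite omega_eq /omega_trace D1 [in RHS]D_nm; ring.
by have := sqr_neq_nonresidue charK nonres r_fixed; rewrite sqr_r eqxx.
Qed.

Lemma frobenius_omega : t ^+ N = tr - t.
Proof.
set y := t ^+ N.
have omega_eq_y : y ^+ 2 = tr * y - nm.
  rewrite /y -(pFrobenius_autE charK) -rmorphXn omega_eq.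
  by rewrite rmorphB rmorphM !rmorph_int.
have : (y - t) * (y - (tr - t)) = 0.
  transitivity ((y ^+ 2 - (tr * y - nm)) - (t ^+ 2 - (tr * t - nm))); first ring.
  by rewrite omega_eq_y omega_eq !subrr.
by move/eqP; rewrite mulf_eq0 !subr_eq0 (negbTE omega_not_frobenius_fixed) => /eqP.
Qed.

Definition elt_embed (w : elt N) : K := emb w.1 + emb w.2 * t.

Lemma elt_embed_inj : injective elt_embed.
Proof.
move=> [a b] [c d]; rewrite /elt_embed /= => eq_embed.
have lin_rel : emb (b - d) * t = emb (c - a).
  apply/eqP; rewrite -subr_eq0; apply/eqP.
  transitivity ((emb a + emb b * t) - (emb c + emb d * t)); first ring.
  by rewrite eq_embed subrr.
(* The left side of lin_rel is fixed by Frobenius, but t is not. *)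
have : emb (b - d) * (t ^+ N - t) = 0.
  rewrite mulrBr -{1}(Zp_embed_frobenius charK (b - d)) -exprMn lin_rel.
  by rewrite (Zp_embed_frobenius charK) subrr.
move/eqP; rewrite mulf_eq0 subr_eq0 (negbTE omega_not_frobenius_fixed) orbF.
rewrite -(rmorph0 emb) => /eqP/Zp_embed_inj/eqP.
rewrite subr_eq0 => /eqP b_d; move: eq_embed; rewrite b_d => /addIr.
by move/Zp_embed_inj ->.
Qed.

Lemma elt_embed_mul x y : elt_embed (emul D x y) = elt_embed x * elt_embed y.
Proof.
case: x y => [a b] [c d]; rewrite emulE /elt_embed /=.
apply/eqP; rewrite -subr_eq0; apply/eqP.
transitivity (emb b * emb d * (tr * t - nm - t ^+ 2)); first ring.
by rewrite omega_eq subrr mulr0.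
Qed.

Lemma elt_embed_one : elt_embed (eone N) = 1.
Proof. by rewrite /elt_embed /= rmorph1 rmorph0 mul0r addr0. Qed.

Lemma elt_embed_mone : elt_embed (emone N) = -1.
Proof. by rewrite /elt_embed /= rmorphN rmorph1 rmorph0 mul0r addr0. Qed.

Lemma elt_embed_epow w k : elt_embed (epow D w k) = elt_embed w ^+ k.
Proof.
elim: k => [|k IHk]; first exact: elt_embed_one.
by rewrite /epow iterS -/(epow D w k) elt_embed_mul IHk exprS.
Qed.

Lemma elt_embed_norm w : elt_embed w ^+ N.+1 = emb (enorm D w).
Proof.
case: w => a b; rewrite enormE exprS {2}/elt_embed /= -(pFrobenius_autE charK).
rewrite rmorphD rmorphM /= !pFrobenius_autE !(Zp_embed_frobenius charK).
rewrite frobenius_omega /elt_embed /=.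
apply/eqP; rewrite -subr_eq0; apply/eqP.
transitivity (emb b ^+ 2 * (tr * t - nm - t ^+ 2)); first ring.
by rewrite omega_eq subrr mulr0.
Qed.

End OmegaRoot.

Lemma expr_pow2M_eq1 (R : idomainType) (x : R) (s u : nat) :
  x ^+ (2 ^ s * u) = 1 ->
  x ^+ u = 1 \/ exists r : nat, (r < s)%N /\ x ^+ (2 ^ r * u) = -1.
Proof.
elim: s => [|s IHs]; first by rewrite mul1n; left.
rewrite expnS -mulnA mulnC exprM => /eqP; rewrite sqrf_eq1 => /orP[/eqP/IHs|/eqP].
  by case=> [|[r [lt_rs xr]]]; [left | right; exists r; split=> //; apply: ltnW].
by right; exists s.
Qed.

Theorem theorem1p4 (N : nat) (D : int) (s u : nat) (w : elt N) :
  prime N -> odd N -> squarefree D -> legendre D N = -1 ->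
  (N.+1 = 2 ^ s * u)%N -> odd u -> (1 <= s)%N ->
  inG D w -> w <> eone N -> w <> emone N ->
  epow D w u = eone N \/
  exists r : nat, (r < s)%N /\ epow D w (2 ^ r * u)%N = emone N.
Proof.
move=> N_prime _ _ nonres N_su _ _ norm_w _ _.
have [K [FtoK _]] := countable_algebraic_closure 'F_N.
have charK : N \in [pchar K] := rmorph_pchar FtoK (pchar_Fp N_prime).
have [t omega_eq] := @solve_monicpoly K 2
  (nth 0 [:: - (omega_norm D)%:~R; (omega_trace D)%:~R]) isT.
rewrite !big_ord_recl big_ord0 /= expr0 expr1 mulr1 addr0 addrC in omega_eq.
have w_pow : elt_embed charK t w ^+ (2 ^ s * u) = 1.
  by rewrite -N_su (elt_embed_norm charK nonres omega_eq) norm_w rmorph1.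
have embed_inj := elt_embed_inj nonres omega_eq.
have embed_epow := elt_embed_epow charK omega_eq w.
case: (expr_pow2M_eq1 w_pow) => [w_u | [r [lt_rs w_r]]].
  by left; apply: embed_inj; rewrite embed_epow w_u elt_embed_one.
right; exists r; split=> //.
by apply: embed_inj; rewrite embed_epow w_r elt_embed_mone.
Qed.
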